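(* Let $0<\delta<1$, $0<\varepsilon<1/7$, $2<\alpha<\min(\frac{2}{1-\delta},3)$ and $0<\rho<\min\!\left(\frac{1-\delta}{2},\frac{2-\alpha(1-\delta)}{4}\right)$ be constants, $p=n^{\delta-1}$, and $H$ a balanced graph on $m=n^{\rho}$ vertices with average degree $\alpha$; let $n$ be sufficiently large. Let $p(G)$ denote the probability of outputting the graph $G$ under $G(n,p)$ and $p_H(G)$ the probability of outputting $G$ under $G_H(n,p)$. Then for every constant $\beta\in[0,1)$, with probability at least $1-\frac{4\varepsilon}{(1-\beta)^2}$ over $G\sim G(n,p)$, $p_H(G)\ge\beta\,p(G)$.
   Context: A graph with average degree $\alpha$ is balanced if every induced subgraph has average degree at most $\alpha$. $G(n,p)$ is the Erdős–Rényi random graph on $[n]$. With $H$ on vertex set $[m]$ ($m$ dividing $n$), partition $[n]$ into parts $P_i=\{(i-1)\frac nm+1,\dots,i\frac nm\}$. Distribution $G_H(n,p)$: sample $G'\sim G(n,p)$, choose a uniformly random set $M=\{v_1,\dots,v_m\}$ with $v_i\in P_i$, and replace the induced subgraph $G'[M]$ by a copy of $H$ with vertex $i$ of $H$ placed at $v_i$. *)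

From HB Require Import structures.
From mathcomp Require Import all_boot all_order all_algebra.
From mathcomp Require Import reals exp.
Set Implicit Arguments. Unset Strict Implicit. Unset Printing Implicit Defensive.
Import Order.TTheory GRing.Theory Num.Theory.
Local Open Scope ring_scope.

Definition is_graph (n : nat) (E : {set {set 'I_n}}) : bool :=
  [forall e in E, #|e| == 2%N].

Definition gnp_prob (R : realType) (n : nat) (p : R) (E : {set {set 'I_n}}) : R :=
  if is_graph E then p ^+ #|E| * (1 - p) ^+ ('C(n, 2) - #|E|) else 0.

Definition induced_edges (m : nat) (E : {set {set 'I_m}}) (S : {set 'I_m}) :=
  [set e in E | e \subset S].

Definition avg_deg (R : realType) (m : nat) (E : {set {set 'I_m}}) (S : {set 'I_m}) : R :=
  (2 * #|induced_edges E S|)%:R / #|S|%:R.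

Definition balanced (R : realType) (m : nat) (E : {set {set 'I_m}}) : Prop :=
  forall S : {set 'I_m}, S != set0 -> avg_deg R E S <= avg_deg R E setT.

(* Placements M = {v_1..v_m} with v_i in part P_i (0-indexed: part of v is v / (n/m)). *)
Definition placements (n m : nat) : {set {ffun 'I_m -> 'I_n}} :=
  [set f : {ffun 'I_m -> 'I_n} | [forall i : 'I_m, (f i %/ (n %/ m))%N == i]].

(* Replace G'[M] by a copy of H, vertex i of H at f i. *)
Definition plant (n m : nat) (E : {set {set 'I_n}}) (f : {ffun 'I_m -> 'I_n})
    (H : {set {set 'I_m}}) : {set {set 'I_n}} :=
  [set e in E | ~~ (e \subset [set f i | i : 'I_m])]
  :|: ((fun e : {set 'I_m} => [set f i | i in e]) @: H).

Definition gH_prob (R : realType) (n m : nat) (p : R) (H : {set {set 'I_m}})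
    (G : {set {set 'I_n}}) : R :=
  (#|placements n m|%:R)^-1 *
  \sum_(f in placements n m) \sum_(E : {set {set 'I_n}} | plant E f H == G)
      gnp_prob p E.

(* Second-moment method. Write q for G(n,p) and h for G_H(n,p). The q-mass of
   the graphs with h < beta q is at most chi2 / (1 - beta)^2, where
   1 + chi2 = sum_G h(G)^2 / q(G). For a fixed placement f, h is again a
   product measure over the pairs of [n] (pairs inside the image of f are forced
   to agree with the planted copy of H), so 1 + chi2 is the average over pairs of
   placements (f, g) of a product, over the pairs e, of
   sum_b h_f(e, b) h_g(e, b) / q(e, b). Such a factor is at most 1 unless e lies
   in the common image f(S), S = {i | f i = g i}, and balancedness bounds the
   product of the remaining ones by Y^|S|, with Y = p^(-alpha/2) (1 - p)^(-m).
   Summing Y^|S| over g part by part gives 1 + chi2 <= (1 + (Y - 1) m / n)^m,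
   and m^2 Y / n = O(n^(2 rho - 1 + (1 - delta) alpha / 2)) tends to 0. *)

From HB Require Import structures.
From mathcomp Require Import all_boot all_order all_algebra.
From mathcomp Require Import reals exp.
From mathcomp Require Import ring lra zify.
Import Order.TTheory GRing.Theory Num.Theory.
Local Open Scope ring_scope.
Set Implicit Arguments. Unset Strict Implicit. Unset Printing Implicit Defensive.

Lemma sum_set_prod_mem (R : comPzSemiRingType) (T : finType) (phi : T -> bool -> R) :
  \sum_(G : {set T}) \prod_(e : T) phi e (e \in G) =
  \prod_(e : T) (phi e true + phi e false).
Proof.
under [RHS]eq_bigr => e _ do rewrite -big_bool.
rewrite bigA_distr_bigA (reindex (fun F : {ffun T -> bool} => [set x | F x])) /=.
  by apply: eq_bigr => F _; apply: eq_bigr => e _; rewrite inE.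
exists (fun G : {set T} => [ffun x => x \in G]) => [F _|G _].
  by apply/ffunP => x; rewrite ffunE inE.
by apply/setP => x; rewrite inE ffunE.
Qed.

Lemma prod_nat_forall (R : comPzSemiRingType) (T : finType) (c : pred T) :
  \prod_(e : T) ((c e)%:R : R) = ([forall e, c e])%:R.
Proof.
have [/forallP c_all|] := boolP [forall e, c e]; first by rewrite big1 // => e _; rewrite c_all.
by rewrite negb_forall => /existsP[e /negbTE ce]; rewrite (bigD1 e) //= ce mul0r.
Qed.

Section GnpProduct.
Variables (R : realType) (p : R) (n : nat).
Hypothesis p01 : 0 <= p <= 1.

(* Sets e with #|e| <> 2 are never edges; giving them weight 1 at b = false
   turns gnp_prob into a product over all subsets of 'I_n. *)
Definition edge_wt (e : {set 'I_n}) (b : bool) : R :=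
  if #|e| == 2%N then (if b then p else 1 - p) else (~~ b)%:R.

Lemma edge_wt_ge0 e b : 0 <= edge_wt e b.
Proof. by case/andP: p01 => p0 p1; rewrite /edge_wt; case: ifP; case: b; rewrite ?subr_ge0. Qed.

Lemma edge_wt_sum e : edge_wt e true + edge_wt e false = 1.
Proof. by rewrite /edge_wt; case: ifP => _; rewrite ?subrKC ?add0r. Qed.

Lemma gnp_probE (G : {set {set 'I_n}}) :
  gnp_prob p G = \prod_(e : {set 'I_n}) edge_wt e (e \in G).
Proof.
rewrite /gnp_prob; case: ifPn => [/forallP G_pairs|].
  have pairG e : e \in G -> #|e| == 2%N by move=> eG; have := G_pairs e; rewrite eG.
  rewrite (bigID (fun e : {set 'I_n} => #|e| == 2%N)) /= [X in _ = _ * X]big1 ?mulr1; last first.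
    by move=> e /negbTE e2; rewrite /edge_wt e2; case: (boolP (e \in G)) => // /pairG; rewrite e2.
  rewrite (bigID (fun e : {set 'I_n} => e \in G)) /= (eq_bigr (fun=> p)); last first.
    by move=> e /andP[e2 ->]; rewrite /edge_wt e2.
  rewrite [X in _ = _ * X](eq_bigr (fun=> 1 - p)); last first.
    by move=> e /andP[e2 /negbTE eG]; rewrite /edge_wt e2 eG.
  rewrite !prodr_const; congr (_ ^+ _ * _ ^+ _).
    apply: eq_card => e; rewrite [in RHS]unfold_in /=.
    by apply/idP/andP => [eG|[]//]; rewrite pairG.
  have := cardsID G [set e : {set 'I_n} | #|e| == 2%N]; rewrite card_draws card_ord.
  have -> : [set e : {set 'I_n} | #|e| == 2%N] :&: G = G.
    by apply/setIidPr/subsetP => e eG; rewrite inE pairG.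
  move=> <-; rewrite addnC addnK.
  by apply: eq_card => e; rewrite !inE andbC.
rewrite negb_forall => /existsP[e]; rewrite negb_imply => /andP[eG /negbTE e2].
by rewrite (bigD1 e) //= /edge_wt e2 eG mul0r.
Qed.

Lemma gnp_prob_ge0 (G : {set {set 'I_n}}) : 0 <= gnp_prob p G.
Proof. by rewrite gnp_probE; apply: prodr_ge0 => e _; apply: edge_wt_ge0. Qed.

Lemma sum_gnp_prob : \sum_(G : {set {set 'I_n}}) gnp_prob p G = 1.
Proof.
under eq_bigr => G _ do rewrite gnp_probE.
by rewrite (sum_set_prod_mem edge_wt) big1 // => e _; rewrite edge_wt_sum.
Qed.

Lemma gnp_prob_eq0 (G : {set {set 'I_n}}) :
  0 < p < 1 -> (gnp_prob p G == 0) = ~~ is_graph G.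
Proof.
case/andP=> p0 p1; rewrite /gnp_prob; case: ifP => _; rewrite ?eqxx //.
by rewrite mulf_eq0 !expf_eq0 (gt_eqF p0) subr_eq0 (gt_eqF p1) !andbF.
Qed.

Lemma sum_gnp_prob_graph (P : pred {set {set 'I_n}}) :
  \sum_(G | is_graph G && P G) gnp_prob p G = \sum_(G | P G) gnp_prob p G.
Proof.
rewrite [RHS](bigID (@is_graph n)) /= [X in _ = _ + X]big1 ?addr0.
  by apply: eq_bigl => G; rewrite andbC.
by move=> G /andP[_ /negbTE gG]; rewrite /gnp_prob gG.
Qed.

End GnpProduct.

Section Planting.
Variables (n m : nat) (f : {ffun 'I_m -> 'I_n}) (H : {set {set 'I_m}}).

Definition plant_set : {set 'I_n} := [set f i | i : 'I_m].

Definition planted_edges : {set {set 'I_n}} :=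
  [set [set f i | i in e] | e : {set 'I_m} in H].

Lemma planted_edge_sub e : e \in planted_edges -> e \subset plant_set.
Proof. by case/imsetP => d _ ->; apply/subsetP => x /imsetP[i _ ->]; apply: imset_f. Qed.

Lemma planted_edge_pair e :
  is_graph H -> injective f -> e \in planted_edges -> #|e| == 2%N.
Proof.
move=> /forallP H_pairs f_inj /imsetP[d dH ->]; rewrite card_imset //.
by have := H_pairs d; rewrite dH.
Qed.

Lemma plant_eqP (E G : {set {set 'I_n}}) :
  reflect (forall e : {set 'I_n},
             if e \subset plant_set then (e \in G) = (e \in planted_edges)
             else (e \in E) = (e \in G))
          (plant E f H == G).
Proof.
apply: (iffP eqP) => [<- e|EG].
  rewrite /plant !inE -/plant_set -/planted_edges.
  case: ifP => sub; rewrite ?sub ?andbF ?andbT //=.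
  by have [/planted_edge_sub|] := boolP (e \in planted_edges); rewrite ?sub ?orbF.
apply/setP => e; have := EG e; rewrite /plant !inE -/plant_set -/planted_edges.
case: ifP => sub; rewrite ?sub ?andbF ?andbT //= => ->.
by have [/planted_edge_sub|] := boolP (e \in planted_edges); rewrite ?sub ?orbF.
Qed.

Variables (R : realType) (p : R).

Definition planted_wt (e : {set 'I_n}) (b : bool) : R :=
  if e \subset plant_set then (b == (e \in planted_edges))%:R else edge_wt p e b.

Lemma planted_wt_outside (e : {set 'I_n}) b :
  ~~ (e \subset plant_set) -> planted_wt e b = edge_wt p e b.
Proof. by move=> /negbTE e_out; rewrite /planted_wt e_out. Qed.

Lemma sum_plant_gnp_prob (G : {set {set 'I_n}}) :
  \sum_(E | plant E f H == G) gnp_prob p E =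
  \prod_(e : {set 'I_n}) planted_wt e (e \in G).
Proof.
pose keep (e : {set 'I_n}) b :=
  if e \subset plant_set then (e \in G) == (e \in planted_edges) else b == (e \in G).
have plantE E : (plant E f H == G) = [forall e, keep e (e \in E)].
  apply/plant_eqP/forallP => EG e; have := EG e; rewrite /keep.
    by case: ifP => _ ->.
  by case: ifP => _ /eqP.
rewrite big_mkcond /= (eq_bigr (fun E : {set {set 'I_n}} =>
  \prod_(e : {set 'I_n}) ((keep e (e \in E))%:R * edge_wt p e (e \in E)))); last first.
  move=> E _; rewrite big_split /= prod_nat_forall -plantE -gnp_probE.
  by case: (plant E f H == G); rewrite ?mul1r ?mul0r.
rewrite (sum_set_prod_mem (fun e b => (keep e b)%:R * edge_wt p e b)).
apply: eq_bigr => e _; rewrite /keep /planted_wt; case: ifP => _.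
  by rewrite -mulrDr edge_wt_sum mulr1 eq_sym.
by case: (e \in G); rewrite /= ?mul1r ?mul0r ?addr0 ?add0r.
Qed.

Hypothesis p01 : 0 <= p <= 1.

Lemma planted_wt_ge0 e b : 0 <= planted_wt e b.
Proof. by rewrite /planted_wt; case: ifP => _; rewrite ?ler0n ?edge_wt_ge0. Qed.

Lemma planted_wt_sum e : planted_wt e true + planted_wt e false = 1.
Proof.
rewrite /planted_wt; case: ifP => _; last exact: edge_wt_sum.
by case: (e \in planted_edges); rewrite /= ?addr0 ?add0r.
Qed.

End Planting.

Lemma gH_probE (R : realType) (p : R) n m (H : {set {set 'I_m}}) (G : {set {set 'I_n}}) :
  gH_prob p H G = (#|placements n m|%:R)^-1 *
    \sum_(f in placements n m) \prod_(e : {set 'I_n}) planted_wt f H p e (e \in G).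
Proof. by rewrite /gH_prob; congr (_ * _); apply: eq_bigr => f _; rewrite sum_plant_gnp_prob. Qed.

Section Placements.
Variables n m : nat.
Implicit Types f g : {ffun 'I_m -> 'I_n}.

Definition part (i : 'I_m) : {set 'I_n} := [set a : 'I_n | (a %/ (n %/ m))%N == i].

Lemma placements_family : placements n m =i family part.
Proof. by move=> f; rewrite inE; apply/forallP/familyP => fP i; have := fP i; rewrite inE. Qed.

Lemma sum_placements_prod (R : comPzSemiRingType) (F : 'I_m -> 'I_n -> R) :
  \sum_(f in placements n m) \prod_(i : 'I_m) F i (f i) =
  \prod_(i : 'I_m) \sum_(a in part i) F i a.
Proof. by rewrite bigA_distr_big_dep; apply: eq_bigl => f; rewrite placements_family. Qed.

Lemma card_part (i : 'I_m) : (m %| n)%N -> #|part i| = (n %/ m)%N.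
Proof.
move=> mn; set k := (n %/ m)%N; have nE : n = (k * m)%N by rewrite divnK.
have [k0|k_gt0] := posnP k.
  by rewrite k0; apply: eq_card0 => a; have := ltn_ord a; rewrite {2}nE k0.
have ik_lt r : (r < k)%N -> (i * k + r < n)%N.
  move=> rk; rewrite nE (leq_trans (_ : _ < i * k + k)%N) ?ltn_add2l //.
  by rewrite -mulSnr mulnC leq_mul2l ltn_ord orbT.
pose shift (r : 'I_k) : 'I_n := Ordinal (ik_lt r (ltn_ord r)).
have shift_inj : injective shift by move=> r s /(congr1 val) /= /addnI /val_inj.
suff -> : part i = shift @: setT by rewrite card_imset // cardsT card_ord.
apply/setP => a; rewrite inE; apply/eqP/imsetP => [ai|[r _ ->]] /=.
  exists (Ordinal (ltn_pmod a k_gt0)) => //; apply/val_inj => /=.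
  by rewrite {1}(divn_eq a k) ai mulnC.
by rewrite divnMDl // divn_small // addn0.
Qed.

Lemma card_placements : (m %| n)%N -> #|placements n m| = ((n %/ m) ^ m)%N.
Proof.
move=> mn; rewrite -sum1_card.
transitivity (\prod_(i : 'I_m) #|part i|)%N; last first.
  rewrite (eq_bigr (fun=> n %/ m)%N) => [|i _]; last exact: card_part.
  by rewrite prod_nat_const card_ord.
under [RHS]eq_bigr => i _ do rewrite -sum1_card.
rewrite bigA_distr_big_dep; apply: eq_big => [f|f _]; first by rewrite placements_family.
by rewrite big1.
Qed.

Lemma placements_index f g i j :
  f \in placements n m -> g \in placements n m -> f i = g j -> i = j.
Proof.
rewrite !inE => /forallP fP /forallP gP fg; apply/val_inj => /=.
by move: (fP i) (gP j); rewrite fg => /eqP <- /eqP <-.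
Qed.

Lemma placement_inj f : f \in placements n m -> injective f.
Proof. by move=> fP i j; apply: placements_index. Qed.

Definition agree f g : {set 'I_m} := [set i | f i == g i].

Lemma sum_placements_agree (R : comPzRingType) (Y : R) f :
  (m %| n)%N -> f \in placements n m ->
  \sum_(g in placements n m) Y ^+ #|agree f g| = (Y + (n %/ m)%:R - 1) ^+ m.
Proof.
move=> mn /[dup] fP; rewrite placements_family => /familyP f_part.
rewrite (eq_bigr (fun g => \prod_(i : 'I_m) if f i == g i then Y else 1)); last first.
  by move=> g _; rewrite -prodr_const big_mkcond; apply: eq_bigr => i _; rewrite inE.
rewrite (sum_placements_prod (fun i a => if f i == a then Y else 1)).
rewrite -[X in _ = _ ^+ X](card_ord m) -prodr_const; apply: eq_bigr => i _.
rewrite (bigD1 (f i)) ?f_part //= eqxx (eq_bigr (fun=> 1)); last first.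
  by move=> a /andP[_ /negbTE]; rewrite eq_sym => ->.
rewrite sumr_const -(card_part i mn) [#|part i|](cardD1 (f i)) f_part -addrA.
rewrite add1n mulrSr addrK; congr (Y + _%:R).
by apply: eq_card => a; rewrite unfold_in /= !inE [RHS]andbC.
Qed.

End Placements.

Lemma mulfK_le (R : numFieldType) (x y : R) : 0 <= x -> x * y / y <= x.
Proof. by move=> x0; have [->|y0] := eqVneq y 0; rewrite ?mulr0 ?mul0r // mulfK. Qed.

Lemma mulKf_le (R : numFieldType) (x y : R) : 0 <= y -> x * y / x <= y.
Proof. by rewrite (mulrC x); apply: mulfK_le. Qed.

Section CrossWeights.
Variables (R : realType) (p : R) (n m : nat) (H : {set {set 'I_m}}).
Hypotheses (p_gt0 : 0 < p) (p_lt1 : p < 1) (H_graph : is_graph H).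
Variables f g : {ffun 'I_m -> 'I_n}.
Hypotheses (fP : f \in placements n m) (gP : g \in placements n m).

Let p01 : 0 <= p <= 1. Proof. by rewrite !ltW. Qed.

Definition cross_wt (e : {set 'I_n}) (b : bool) : R :=
  planted_wt f H p e b * planted_wt g H p e b / edge_wt p e b.

Definition cross_bound (e : {set 'I_n}) : R :=
  if (e \subset plant_set f) && (e \subset plant_set g) then
    (if e \in planted_edges f H then p^-1 else 1) *
    (if #|e| == 2%N then (1 - p)^-1 else 1)
  else 1.

Lemma cross_wt_ge0 (e : {set 'I_n}) b : 0 <= cross_wt e b.
Proof. by rewrite divr_ge0 ?mulr_ge0 ?planted_wt_ge0 ?edge_wt_ge0. Qed.

Lemma sum_cross_wt_le (e : {set 'I_n}) :
  cross_wt e true + cross_wt e false <= cross_bound e.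
Proof.
have pV_ge1 : 1 <= p^-1 by rewrite invf_ge1 ?ltW.
have qV_ge1 : 1 <= (1 - p)^-1 by rewrite invf_ge1 ?subr_gt0 // gerBl ltW.
rewrite /cross_bound /cross_wt; case: ifPn => [/andP[ef eg]|].
  rewrite /planted_wt ef eg.
  have [eF|eF] := boolP (e \in planted_edges f H).
    rewrite /edge_wt (planted_edge_pair H_graph (placement_inj fP) eF) /= !mul0r addr0 mul1r.
    apply: (@le_trans _ _ p^-1); last by rewrite ler_peMr ?(le_trans ler01).
    by case: (e \in _); rewrite ?mul1r ?mul0r // invr_ge0 ltW.
  rewrite /= !mul0r add0r !mul1r.
  apply: (@le_trans _ _ (edge_wt p e false)^-1).
    by case: (e \in _); rewrite /= ?mul1r ?mul0r ?invr_ge0 ?edge_wt_ge0.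
  by rewrite /edge_wt; case: ifP => _; rewrite ?invr1.
rewrite negb_and => /orP[] e_out.
  rewrite -(planted_wt_sum g H p e).
  by apply: lerD; rewrite planted_wt_outside // mulKf_le ?planted_wt_ge0.
rewrite -(planted_wt_sum f H p e).
by apply: lerD;
  rewrite [planted_wt g _ _ _ _]planted_wt_outside // mulfK_le ?planted_wt_ge0.
Qed.

Lemma subset_plant_sets_agree (e : {set 'I_n}) :
  e \subset plant_set f -> e \subset plant_set g -> e \subset f @: agree f g.
Proof.
move=> /subsetP ef /subsetP eg; apply/subsetP => x xe.
have [i _ xi] := imsetP (ef x xe); have [j _ xj] := imsetP (eg x xe).
have ij : i = j by apply: (placements_index fP gP); rewrite -xi -xj.
by rewrite xi imset_f // inE -xi ij -xj.
Qed.

Lemma card_common_planted_edges :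
  (#|[pred e : {set 'I_n} | (e \subset plant_set f) && (e \subset plant_set g)
               & e \in planted_edges f H]|
     <= #|induced_edges H (agree f g)|)%N.
Proof.
rewrite (leq_trans _ (leq_imset_card (fun d : {set 'I_m} => [set f i | i in d]) _)) //.
apply: subset_leq_card; apply/subsetP => e.
rewrite !inE => /andP[/andP[ef eg] /imsetP[d dH ed]].
apply/imsetP; exists d => //; rewrite inE dH /=; apply/subsetP => i id.
have /imsetP[j jS /(placement_inj fP) ->] : f i \in f @: agree f g.
  by apply: (subsetP (subset_plant_sets_agree ef eg)); rewrite ed imset_f.
exact: jS.
Qed.

Lemma card_common_pairs :
  (#|[pred e : {set 'I_n} | (e \subset plant_set f) && (e \subset plant_set g)
                          & #|e| == 2%N]| <= m * #|agree f g|)%N.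
Proof.
apply: (@leq_trans 'C(#|f @: agree f g|, 2)).
  rewrite -cards_draws; apply: subset_leq_card; apply/subsetP => e.
  by rewrite !inE => /andP[/andP[ef eg] ->]; rewrite subset_plant_sets_agree.
apply: (@leq_trans 'C(#|agree f g|, 2)); first by rewrite leq_bin2l ?leq_imset_card.
have : (#|agree f g| <= m)%N by rewrite -[X in (_ <= X)%N]card_ord max_card.
rewrite bin2; nia.
Qed.

Variable alpha : R.
Hypothesis H_sparse :
  forall S : {set 'I_m}, (2 * #|induced_edges H S|)%:R <= alpha * #|S|%:R.

Lemma prod_cross_bound_le :
  \prod_(e : {set 'I_n}) cross_bound e <=
  (p^-1 `^ (alpha / 2) * (1 - p)^-1 ^+ m) ^+ #|agree f g|.
Proof.
have pV_ge1 : 1 <= p^-1 by rewrite invf_ge1 ?ltW.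
have qV_ge1 : 1 <= (1 - p)^-1 by rewrite invf_ge1 ?subr_gt0 // gerBl ltW.
rewrite /cross_bound -big_mkcond big_split -!big_mkcondr /= !prodr_const exprMn -exprM.
apply: ler_pM; rewrite ?exprn_ge0 ?(le_trans ler01) //.
  rewrite -powR_mulrn ?(le_trans ler01) // -powR_mulrn ?powR_ge0 // -powRrM.
  apply: ler_powR => //; apply: (le_trans _ (_ : #|induced_edges H (agree f g)|%:R <= _)).
    by rewrite ler_nat card_common_planted_edges.
  by have := H_sparse (agree f g); rewrite natrM; lra.
by apply: (ler_weXn2l qV_ge1); rewrite (leq_trans _ card_common_pairs).
Qed.

End CrossWeights.

Section PlantedDistribution.
Variables (R : realType) (p : R) (n m : nat) (H : {set {set 'I_m}}).
Hypotheses (p_gt0 : 0 < p) (p_lt1 : p < 1) (H_graph : is_graph H).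
Hypotheses (m_dvd_n : (m %| n)%N) (n_gt0 : (0 < n)%N).

Lemma card_placements_gt0 : (0 < #|placements n m|)%N.
Proof.
rewrite card_placements // expn_gt0; have [->|m_gt0] := posnP m; first by rewrite orbT.
by rewrite divn_gt0 // dvdn_leq.
Qed.

Lemma sum_gH_prob : \sum_(G : {set {set 'I_n}}) gH_prob p H G = 1.
Proof.
under eq_bigr => G _ do rewrite gH_probE.
rewrite -mulr_sumr exchange_big /= (eq_bigr (fun=> 1)) => [|f _]; last first.
  by rewrite (sum_set_prod_mem (planted_wt f H p)) big1 // => e _; rewrite planted_wt_sum.
by rewrite sumr_const -mulr_natl mulr1 mulVf // pnatr_eq0 -lt0n card_placements_gt0.
Qed.

Lemma gH_prob_nongraph (G : {set {set 'I_n}}) : ~~ is_graph G -> gH_prob p H G = 0.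
Proof.
rewrite negb_forall => /existsP[e]; rewrite negb_imply => /andP[eG /negbTE e2].
rewrite gH_probE big1 ?mulr0 // => f fP; rewrite (bigD1 e) //= eG.
rewrite /planted_wt; case: ifP => _; last by rewrite /edge_wt e2 mul0r.
have [/(planted_edge_pair H_graph (placement_inj fP))|] := boolP (e \in planted_edges f H).
  by rewrite e2.
by rewrite mul0r.
Qed.

Lemma gH_prob_sqr_div (G : {set {set 'I_n}}) :
  gH_prob p H G ^+ 2 / gnp_prob p G =
  (#|placements n m|%:R)^-2 * \sum_(f in placements n m) \sum_(g in placements n m)
    \prod_(e : {set 'I_n}) cross_wt p H f g e (e \in G).
Proof.
rewrite gH_probE exprMn -exprVn -mulrA; congr (_ * _).
rewrite expr2 mulr_suml mulr_suml; apply: eq_bigr => f _.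
rewrite mulr_sumr mulr_suml; apply: eq_bigr => g _.
by rewrite gnp_probE -prodfV -!big_split.
Qed.

Hypothesis m_gt0 : (0 < m)%N.
Variable alpha : R.
Hypothesis H_sparse :
  forall S : {set 'I_m}, (2 * #|induced_edges H S|)%:R <= alpha * #|S|%:R.

Lemma sum_gH_prob_sqr_div_le :
  \sum_(G : {set {set 'I_n}}) gH_prob p H G ^+ 2 / gnp_prob p G <=
  (1 + (p^-1 `^ (alpha / 2) * (1 - p)^-1 ^+ m - 1) / (n %/ m)%:R) ^+ m.
Proof.
set Y := p^-1 `^ (alpha / 2) * (1 - p)^-1 ^+ m; set k := (n %/ m)%N.
have k_neq0 : (k%:R : R) != 0 by rewrite pnatr_eq0 -lt0n divn_gt0 // dvdn_leq.
under eq_bigr => G _ do rewrite gH_prob_sqr_div.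
rewrite -mulr_sumr exchange_big /=.
apply: (@le_trans _ _ ((#|placements n m|%:R)^-2 *
          \sum_(f in placements n m) \sum_(g in placements n m) Y ^+ #|agree f g|)).
  rewrite ler_wpM2l ?invr_ge0 ?exprn_ge0 // ler_sum // => f fP.
  rewrite exchange_big ler_sum // => g gP; rewrite (sum_set_prod_mem (cross_wt p H f g)).
  rewrite (le_trans _ (prod_cross_bound_le _ _ _ fP gP H_sparse)) //.
  by rewrite ler_prod // => e _; rewrite sum_cross_wt_le // addr_ge0 ?cross_wt_ge0.
rewrite (eq_bigr (fun=> (Y + k%:R - 1) ^+ m)) => [|f fP]; last exact: sum_placements_agree.
rewrite sumr_const card_placements // -/k -[_ ^+ m *+ _]mulr_natl natrX.
have -> : 1 + (Y - 1) / k%:R = (Y + k%:R - 1) / k%:R by field.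
by rewrite exprMn exprVn le_eqVlt; apply/predU1l; field; rewrite expf_neq0.
Qed.

End PlantedDistribution.

Section ChiSquareTail.
Variables (R : realFieldType) (T : finType) (q h : T -> R).
Hypotheses (q_ge0 : forall x, 0 <= q x) (h_abs : forall x, q x = 0 -> h x = 0).
Hypotheses (sum_q : \sum_x q x = 1) (sum_h : \sum_x h x = 1).

Lemma sum_sqr_sub_div : \sum_x (q x - h x) ^+ 2 / q x = \sum_x h x ^+ 2 / q x - 1.
Proof.
transitivity (\sum_x (q x - 2 * h x + h x ^+ 2 / q x)).
  apply: eq_bigr => x _; have [qx0|qx_neq0] := eqVneq (q x) 0; last by field.
  by rewrite qx0 (h_abs qx0) invr0 !mulr0 subr0 addr0.
by rewrite !big_split /= sumrN -mulr_sumr sum_q sum_h; ring.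
Qed.

Lemma mass_ratio_lt_le (beta : R) : 0 <= beta < 1 ->
  (1 - beta) ^+ 2 * \sum_(x | h x < beta * q x) q x <= \sum_x (q x - h x) ^+ 2 / q x.
Proof.
case/andP=> b0 b1; rewrite mulr_sumr [X in _ <= X](bigID (fun x => h x < beta * q x)) /=.
rewrite ler_wpDr ?sumr_ge0 ?ler_sum // => x hx; first by rewrite divr_ge0 ?sqr_ge0.
have qx_gt0 : 0 < q x.
  rewrite lt_def q_ge0 andbT; apply: contraTneq hx => /[dup] qx0 /h_abs ->.
  by rewrite qx0 mulr0 ltxx.
have bq_ge0 : 0 <= (1 - beta) * q x by rewrite mulr_ge0 ?subr_ge0 ?ltW.
rewrite ler_pdivlMr // -mulrA -expr2 -exprMn ler_pXn2r ?nnegrE //; lra.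
Qed.

Lemma mass_ratio_ge (beta c : R) : 0 <= beta < 1 ->
  \sum_x h x ^+ 2 / q x <= 1 + c ->
  1 - c / (1 - beta) ^+ 2 <= \sum_(x | beta * q x <= h x) q x.
Proof.
move=> /[dup] b01 /andP[_ b_lt1] chi2_le.
have b_gt0 : 0 < (1 - beta) ^+ 2 by rewrite exprn_gt0 ?subr_gt0.
have tail_le : \sum_(x | h x < beta * q x) q x <= c / (1 - beta) ^+ 2.
  rewrite ler_pdivlMr // mulrC (le_trans (mass_ratio_lt_le b01)) //.
  by rewrite sum_sqr_sub_div; lra.
have : \sum_(x | beta * q x <= h x) q x + \sum_(x | h x < beta * q x) q x = 1.
  rewrite -sum_q [RHS](bigID (fun x => beta * q x <= h x)); congr (_ + _).
  by apply: eq_bigl => x; rewrite ltNge.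
lra.
Qed.

End ChiSquareTail.

Lemma subrXn_ge (R : realDomainType) (x : R) (k : nat) :
  0 <= x <= 1 -> 1 - k%:R * x <= (1 - x) ^+ k.
Proof.
case/andP=> x0 x1; elim: k => [|k IHk]; first by rewrite expr0 mul0r subr0.
have := ler_wpM2r (_ : 0 <= 1 - x) IHk; rewrite subr_ge0 exprSr -natr1 => /(_ x1).
have := mulr_ge0 (ler0n R k) (mulr_ge0 x0 x0); nra.
Qed.

Lemma addrXn_mul_le1 (R : realDomainType) (x : R) (k : nat) :
  0 <= x -> (1 + x) ^+ k * (1 - k%:R * x) <= 1.
Proof.
move=> x0; elim: k => [|k IHk]; first by rewrite expr0 mul0r subr0 mul1r.
rewrite exprSr -mulrA (le_trans _ IHk) // ler_wpM2l ?exprn_ge0 ?addr_ge0 //.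
have := mulr_ge0 (mulr_ge0 (ler0n R k) x0) x0; rewrite -natr1; nra.
Qed.

Lemma addrXn_le (R : realFieldType) (x eps : R) (k : nat) :
  0 <= x -> 0 <= eps <= 1 / 4 -> k%:R * x <= 2 * eps -> (1 + x) ^+ k <= 1 + 4 * eps.
Proof.
move=> x0 /andP[e0 e1] kx_le.
have kx_lt1 : 0 < 1 - k%:R * x by lra.
rewrite -(ler_pM2r kx_lt1) (le_trans (addrXn_mul_le1 k x0)) //.
have : 0 <= (1 + 4 * eps) * (2 * eps - k%:R * x) by apply: mulr_ge0; lra.
have : 0 <= eps * (1 - 4 * eps) by apply: mulr_ge0; lra.
nra.
Qed.

Lemma natr_powR_le_eventually (R : realType) (c t : R) : c < 0 -> 0 < t ->
  exists N : nat, forall n : nat, (N <= n)%N -> (n%:R : R) `^ c <= t.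
Proof.
move=> c_lt0 t_gt0; have a_gt0 : 0 < - c by rewrite oppr_gt0.
exists (Num.truncn (t^-1 `^ (- c)^-1)).+1 => n nN.
have tV_le_n : t^-1 `^ (- c)^-1 <= n%:R.
  by rewrite (le_trans (ltW (truncnS_gt _))) ?ler_nat.
have := ge0_ler_powR (ltW a_gt0) (powR_ge0 _ _) (ler0n _ n) tV_le_n.
rewrite -powRrM mulVf ?gt_eqF // powRr1 ?invr_ge0 ?(ltW t_gt0) // => tV_le.
have na_gt0 : 0 < n%:R `^ (- c) by rewrite (lt_le_trans _ tV_le) ?invr_gt0.
by rewrite -[c]opprK powRN -[t]invrK lef_pV2 ?posrE ?invr_gt0.
Qed.

Lemma planted_chi2_bound_le (R : realFieldType) (p B eps : R) (m k : nat) :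
  0 < p < 1 -> m%:R * p <= 1 / 2 -> 1 <= B -> (0 < k)%N -> 0 <= eps <= 1 / 4 ->
  m%:R * B / k%:R <= eps ->
  (1 + (B * (1 - p)^-1 ^+ m - 1) / k%:R) ^+ m <= 1 + 4 * eps.
Proof.
move=> /andP[p_gt0 p_lt1] mp_le B_ge1 k_gt0 eps01 mBk_le.
have k_gt0R : (0 : R) < k%:R by rewrite ltr0n.
have Z_ge1 : 1 <= (1 - p)^-1 ^+ m by rewrite exprn_ege1 // invf_ge1 ?subr_gt0 // gerBl ltW.
have Z_le2 : (1 - p)^-1 ^+ m <= 2.
  have Bern : 1 - m%:R * p <= (1 - p) ^+ m by rewrite subrXn_ge ?ltW.
  by rewrite exprVn invf_ple ?posrE ?exprn_gt0 ?subr_gt0 //; lra.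
have BZ_le : B * (1 - p)^-1 ^+ m - 1 <= 2 * B.
  by have := ler_wpM2l (le_trans ler01 B_ge1) Z_le2; lra.
apply: addrXn_le => //; first by rewrite divr_ge0 ?ler0n // subr_ge0 mulr_ege1.
rewrite mulrA; apply: (@le_trans _ _ (2 * (m%:R * B / k%:R))); last by lra.
have -> : 2 * (m%:R * B / k%:R) = m%:R * (2 * B) / k%:R by ring.
by rewrite ler_wpM2r ?invr_ge0 ?ler0n // ler_wpM2l ?ler0n.
Qed.

Lemma gnp_planted_params_eventually (R : realType) (delta eps alpha rho : R) :
  0 < eps -> rho + (delta - 1) < 0 -> rho + rho + (1 - delta) * (alpha / 2) - 1 < 0 ->
  exists N : nat, forall n m : nat, (N <= n)%N -> m%:R = (n%:R : R) `^ rho -> (m %| n)%N ->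
    let p := (n%:R : R) `^ (delta - 1) in
    [/\ (0 < n)%N, (0 < m)%N, 0 < p < 1, m%:R * p <= 1 / 2
      & m%:R * p^-1 `^ (alpha / 2) / (n %/ m)%:R <= eps].
Proof.
move=> eps_gt0 mp_exp chi2_exp.
have half_gt0 : (0 : R) < 1 / 2 by lra.
have [N1 mp_small] := natr_powR_le_eventually mp_exp half_gt0.
have [N2 chi2_small] := natr_powR_le_eventually chi2_exp eps_gt0.
exists (maxn 1 (maxn N1 N2)) => n m.
rewrite !geq_max => /and3P[n_gt0 nN1 nN2] mE m_dvd_n p.
have n_gt0R : (0 : R) < n%:R by rewrite ltr0n.
have nD r s : (n%:R : R) `^ (r + s) = n%:R `^ r * n%:R `^ s.
  by rewrite powRD // (gt_eqF n_gt0R) implybT.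
have m_gt0 : (0 < m)%N by rewrite -(ltr0n R) mE powR_gt0.
have p_gt0 : 0 < p by rewrite powR_gt0.
have mp_le : m%:R * p <= 1 / 2 by rewrite mE -nD mp_small.
have m_ge1 : (1 : R) <= m%:R by rewrite ler1n.
split => //; first by rewrite p_gt0 /=; nra.
rewrite natr_div ?unitfE ?pnatr_eq0 -?lt0n // invf_div.
have -> : m%:R * p^-1 `^ (alpha / 2) * (m%:R / n%:R) =
          n%:R `^ (rho + rho + (1 - delta) * (alpha / 2) - 1).
  rewrite !nD powR_inv1 ?ler0n // -mE /p -powRN opprB -powRrM.
  by field; rewrite gt_eqF.
exact: chi2_small.
Qed.

Lemma balanced_induced_edges_le (R : realType) m (H : {set {set 'I_m}}) :
  is_graph H -> balanced R H ->
  forall S, (2 * #|induced_edges H S|)%:R <= avg_deg R H setT * #|S|%:R.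
Proof.
move=> /forallP H_pairs H_bal S; have [->|S_neq0] := eqVneq S set0.
  rewrite cards0 mulr0 (_ : induced_edges H set0 = set0) ?cards0 //.
  apply/setP => e; rewrite !inE subset0; apply/andP => -[eH /eqP e0].
  by have := H_pairs e; rewrite eH e0 cards0.
by rewrite -ler_pdivrMr ?ltr0n ?card_gt0 //; apply: H_bal.
Qed.

Unset Implicit Arguments.
Set Strict Implicit.

Theorem lemmaC2 (R : realType) (delta eps alpha rho : R) :
  0 < delta -> delta < 1 ->
  0 < eps -> eps < 1 / 7 ->
  2 < alpha -> alpha < 2 / (1 - delta) -> alpha < 3 ->
  0 < rho -> rho < (1 - delta) / 2 -> rho < (2 - alpha * (1 - delta)) / 4 ->
  exists N : nat, forall n : nat, (N <= n)%N ->
  forall (m : nat) (H : {set {set 'I_m}}),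
    m%:R = (n%:R : R) `^ rho -> (m %| n)%N ->
    is_graph H -> avg_deg R H setT = alpha -> balanced R H ->
  forall beta : R, 0 <= beta -> beta < 1 ->
    let p : R := (n%:R : R) `^ (delta - 1) in
    1 - 4 * eps / (1 - beta) ^+ 2 <=
      \sum_(G : {set {set 'I_n}} | is_graph G && (beta * gnp_prob p G <= gH_prob p H G))
        gnp_prob p G.
Proof.
move=> _ d_lt1 eps_gt0 eps_lt a_gt2 _ _ _ rho_lt1 rho_lt2.
have mp_exp : rho + (delta - 1) < 0 by lra.
have chi2_exp : rho + rho + (1 - delta) * (alpha / 2) - 1 < 0 by lra.
have [N params] := gnp_planted_params_eventually eps_gt0 mp_exp chi2_exp.
exists N => n nN m H mE m_dvd_n H_graph H_avg H_bal beta b_ge0 b_lt1 /=.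
have [n_gt0 m_gt0 p01 mp_le chi2_le] := params n m nN mE m_dvd_n.
have /andP[p_gt0 p_lt1] := p01.
rewrite sum_gnp_prob_graph; apply: mass_ratio_ge; rewrite ?b_ge0 //.
- by move=> G; rewrite gnp_prob_ge0 // !ltW.
- by move=> G /eqP; rewrite gnp_prob_eq0 // => /gH_prob_nongraph ->.
- exact: sum_gnp_prob.
- exact: sum_gH_prob.
have H_sparse := balanced_induced_edges_le H_graph H_bal.
rewrite H_avg in H_sparse.
apply: le_trans (sum_gH_prob_sqr_div_le p_gt0 p_lt1 H_graph m_dvd_n n_gt0 m_gt0 H_sparse) _.
apply: planted_chi2_bound_le => //.
- rewrite -[X in X <= _](powRr0 (n%:R `^ (delta - 1))^-1); apply: ler_powR; last by lra.
  by rewrite invf_ge1 // ltW.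
- by rewrite divn_gt0 // dvdn_leq.
- by rewrite ltW //=; lra.
Qed.
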